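(* Let $p$ be a prime with $p\notin\{2,3,7,43\}$ such that none of the numbers $1+2p,\ 1+6p,\ 1+14p,\ 1+42p,\ 1+86p,\ 1+258p,\ 1+602p,\ 1+1806p$ is prime. Then $\mathcal{M}_p\subseteq\{1,2,6,42,1806\}\cup p\cdot\{1,2,6,42,1806\}$; in particular $\mathcal{M}_p$ is finite.
   Context: For positive integers $k,n$ let $S_k(n)=\sum_{i=1}^{n} i^k$. For an integer $a$, $\mathcal{M}_a$ denotes the set of positive integers $n$ such that $S_n(n)\equiv a\pmod{n}$. For a set $A$ of integers and an integer $c$, $c\cdot A=\{ca : a\in A\}$. *)

From mathcomp Require Import all_boot.
Set Implicit Arguments. Unset Strict Implicit. Unset Printing Implicit Defensive.

Definition S (k n : nat) : nat := \sum_(1 <= i < n.+1) i ^ k.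

Definition inM (a n : nat) : Prop := 0 < n /\ S n n = a %[mod n].

Definition baseSet : seq nat := [:: 1; 2; 6; 42; 1806].

From mathcomp Require Import all_boot all_algebra all_solvable all_field.
Import GRing.Theory.

Set Implicit Arguments.
Unset Strict Implicit.
Unset Printing Implicit Defensive.

(* Write n = p^a m with p not dividing m.  For a prime q dividing n with
   q <> p, the power sum S_n(n) vanishes modulo q as soon as q - 1 does not
   divide n or q^2 divides n (multiply the summation index by a unit g with
   g^n <> 1, resp. use periodicity of i^n modulo q); since S_n(n) = p
   (mod q), neither happens.  The same argument for p^2 shows that p^2 | n
   forces p - 1 | n.  Hence m is squarefree and q - 1 | n for every prime
   q | m.  By strong induction on q, every such q lies in {2, 3, 7, 43}:
   writing q - 1 = p^b d with d | 1806, the case b = 1 is excluded by the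
   hypotheses on the primes 1 + d p, and b >= 2 would give p - 1 | n, hence
   p - 1 | 1806 and p in {2, 3, 7, 43}.  So m | 1806 with q - 1 | m for all
   primes q | m, which singles out the primary pseudoperfect numbers
   1, 2, 6, 42, 1806; and a <= 1 since p^2 | n would again give p - 1 | n. *)

Lemma exists_pow_mod_prime_neq1 q n : prime q -> ~~ (q.-1 %| n) ->
  exists g, coprime q g /\ g ^ n %% q != 1.
Proof.
move=> q_pr q1_ndvd; have q_gt1 := prime_gt1 q_pr.
pose units := enum [pred x : 'F_q | x != 0%R].
have : has (q.-1).-primitive_root%R units.
  apply: has_prim_root; last 1 first.
  - rewrite -cardE; have := cardC1 (0%R : 'F_q); rewrite card_Fp // => <-.
    by apply: eq_leq; apply: eq_card => x; rewrite !inE.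
  - by rewrite -ltnS prednK // ltnW.
  - apply/allP => x; rewrite mem_enum inE => x_neq0.
    rewrite unity_rootE; apply/eqP/(mulfI x_neq0); rewrite mulr1 -exprS.
    by rewrite prednK ?(ltnW q_gt1) //; have := expf_card x; rewrite card_Fp.
  - exact: enum_uniq.
case/hasP => w; rewrite mem_enum inE => w_neq0 w_prim.
exists (val w); split.
  rewrite prime_coprime //; apply/negP => q_dvd_w; move: w_neq0.
  have w_lt_q : val w < q by rewrite (leq_trans (ltn_ord w)) // Fp_cast.
  suff -> : w = 0%R by rewrite eqxx.
  by apply: val_inj; apply/eqP; rewrite -(modn_small w_lt_q).
apply/negP => /eqP wn_mod; move: q1_ndvd; rewrite (prim_order_dvd w_prim).
have : (((val w) ^ n)%:R : 'F_q)%R = 1%R by rewrite -Fp_nat_mod // wn_mod.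
by rewrite natrX natr_Zp => ->; rewrite eqxx.
Qed.

Definition psum k N := \sum_(0 <= i < N) i ^ k.

Lemma S_psum k n : 0 < k -> S k n = psum k n + n ^ k.
Proof.
move=> k_gt0; rewrite /S /psum -big_nat_recr //=.
by rewrite [in RHS]big_ltn // exp0n // add0n.
Qed.

Lemma psum_mul_mod k M c : psum k (c * M) = c * psum k M %[mod M].
Proof.
elim: c => [|c IHc]; first by rewrite /psum mul0n big_geq.
rewrite mulSn addnC /psum (big_cat_nat _ (leq_addr _ _)) //=.
rewrite -modnDm -/(psum k (c * M)) IHc modnDm.
have shift : \sum_(c * M <= i < c * M + M) i ^ k = psum k M %[mod M].
  rewrite -[X in \sum_(X <= i < _) _]add0n big_addn addKn /psum.
  rewrite -[LHS]modn_summ -[RHS]modn_summ; congr (_ %% M).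
  by apply: eq_bigr => i _; rewrite -modnXm addnC modnMDl modnXm.
by rewrite -modnDmr shift modnDmr mulSn addnC.
Qed.

Lemma S_mod_dvd n M : 0 < n -> M %| n -> S n n = n %/ M * psum n M %[mod M].
Proof.
move=> n_gt0 M_dvd_n; rewrite S_psum // -modnDmr.
have -> : n ^ n %% M = 0 by apply/eqP; apply: dvdn_exp.
by rewrite addn0 -[X in psum _ X](divnK M_dvd_n) psum_mul_mod.
Qed.

(* Multiplication by g permutes the residues modulo M. *)
Lemma psum_mod_coprime n M g : 0 < M -> coprime M g ->
  psum n M = g ^ n * psum n M %[mod M].
Proof.
move=> M_gt0 coMg; rewrite /psum big_mkord.
pose mulg (i : 'I_M) := Ordinal (ltn_pmod (g * i) M_gt0).
have mulg_inj : injective mulg.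
  suff le_inj (i j : 'I_M) : i <= j -> mulg i = mulg j -> i = j.
    by move=> i j; case: (leqP i j) => [/le_inj//|/ltnW/le_inj Hji /esym/Hji].
  move=> le_ij /(congr1 val) /= /eqP eq_mod.
  have : M %| j - i.
    rewrite -(Gauss_dvdr _ coMg) mulnBr -eqn_mod_dvd ?leq_mul2l ?le_ij ?orbT //.
    by rewrite eq_sym.
  rewrite /dvdn modn_small ?subn_eq0 => [le_ji|]; last first.
    by rewrite (leq_ltn_trans (leq_subr _ _)).
  by apply: val_inj; apply/eqP; rewrite eqn_leq le_ij.
rewrite [in LHS](reindex_inj mulg_inj) /= big_distrr /=.
rewrite -[LHS]modn_summ -[RHS]modn_summ; congr (_ %% M).
by apply: eq_bigr => i _; rewrite modnXm expnMn.
Qed.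

Lemma psum_prime_pow_mod0 q k n g : prime q -> coprime q g ->
  g ^ n %% q != 1 -> psum n (q ^ k) %% q ^ k = 0.
Proof.
move=> q_pr coqg gn_neq1.
have g_gt0 : 0 < g.
  case: g coqg {gn_neq1} => //; rewrite /coprime gcdn0 => /eqP q_eq1.
  by rewrite q_eq1 in q_pr.
have gn_gt0 : 0 < g ^ n by rewrite expn_gt0 g_gt0.
have : q ^ k %| (g ^ n - 1) * psum n (q ^ k).
  rewrite mulnBl mul1n -eqn_mod_dvd ?leq_pmull // eq_sym; apply/eqP.
  by apply: psum_mod_coprime; rewrite ?expn_gt0 ?prime_gt0 ?coprimeXl.
rewrite Gauss_dvdr => [/eqP //|]; rewrite coprimeXl // prime_coprime //.
apply: contra gn_neq1; rewrite -(eqn_mod_dvd _ gn_gt0) => /eqP->.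
by rewrite modn_small ?prime_gt1.
Qed.

Lemma S_mod_prime_pow q k n : 0 < n -> prime q -> q ^ k %| n ->
  ~~ (q.-1 %| n) -> S n n %% q ^ k = 0.
Proof.
move=> n_gt0 q_pr qk_dvd_n q1_ndvd.
have [g [coqg gn_neq1]] := exists_pow_mod_prime_neq1 q_pr q1_ndvd.
rewrite S_mod_dvd // -modnMmr.
by rewrite (psum_prime_pow_mod0 _ q_pr coqg gn_neq1) muln0 mod0n.
Qed.

Lemma S_mod_prime_sq q n : 0 < n -> prime q -> q ^ 2 %| n -> S n n %% q = 0.
Proof.
move=> n_gt0 q_pr q2_dvd_n.
have q_dvd_n : q %| n by rewrite (dvdn_trans _ q2_dvd_n) // dvdn_exp.
have : q %| n %/ q by rewrite dvdn_divRL.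
by rewrite S_mod_dvd // -modnMml => /eqP->; rewrite mul0n mod0n.
Qed.

Lemma dvdn_squarefree x N : 0 < x ->
  (forall s, prime s -> s %| x -> s %| N /\ ~~ (s ^ 2 %| x)) -> x %| N.
Proof.
move=> x_gt0 Hx; apply/(dvdn_partP _ x_gt0) => s.
rewrite mem_primes => /and3P[s_pr _ s_dvd_x].
have [s_dvd_N s2_ndvd] := Hx s s_pr s_dvd_x.
rewrite p_part; suff -> : logn s x = 1 by rewrite expn1.
apply/eqP; rewrite eqn_leq -(pfactor_dvdn _ _ x_gt0) ?expn1 // s_dvd_x andbT.
by rewrite leqNgt -(pfactor_dvdn _ _ x_gt0).
Qed.

Lemma prime_succ_dvd1806 d : d %| 1806 -> prime d.+1 -> d.+1 %| 1806.
Proof.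
move=> d_dvd; have d_div : d \in divisors 1806 by rewrite -dvdn_divisors.
by apply/implyP; move: d d_div {d_dvd}; apply/allP; vm_compute.
Qed.

Lemma pred_prime_dvd1806 q : prime q -> q %| 1806 -> q.-1 %| 1806.
Proof.
move=> q_pr q_dvd; have : q \in primes 1806 by rewrite mem_primes q_pr q_dvd.
by move: q {q_pr q_dvd}; apply/allP; vm_compute.
Qed.

Lemma dvd1806_odd_or_even d : d %| 1806 ->
  odd d || (d \in [:: 2; 6; 14; 42; 86; 258; 602; 1806]).
Proof.
move=> d_dvd; have : d \in divisors 1806 by rewrite -dvdn_divisors.
by move: d {d_dvd}; apply/allP; vm_compute.
Qed.

Lemma dvd1806_baseSet m : m %| 1806 ->
  (forall q, prime q -> q %| m -> q.-1 %| m) -> m \in baseSet.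
Proof.
move=> m_dvd Hm; have m_div : m \in divisors 1806 by rewrite -dvdn_divisors.
have : all (fun q => q.-1 %| m) (primes m).
  by apply/allP => q; rewrite mem_primes => /and3P[q_pr _]; apply: Hm.
by apply/implyP; move: m m_div {m_dvd Hm}; apply/allP; vm_compute.
Qed.

Lemma prime_notin_ndvd1806 p :
  prime p -> p \notin [:: 2; 3; 7; 43] -> ~~ (p %| 1806).
Proof.
move=> p_pr; apply: contra => p_dvd.
have primes1806 : primes 1806 = [:: 2; 3; 7; 43] by vm_compute.
by rewrite -primes1806 mem_primes p_pr p_dvd.
Qed.

Lemma not_prime_succ_mul p d : prime p -> ~~ (p %| 1806) ->
  all (fun e => ~~ prime (1 + e * p)) [:: 2; 6; 14; 42; 86; 258; 602; 1806] ->
  d %| 1806 -> ~~ prime (p * d).+1.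
Proof.
move=> p_pr p_ndvd He d_dvd.
case/orP: (dvd1806_odd_or_even d_dvd) => [d_odd|d_even]; last first.
  by rewrite mulnC -add1n; apply: (allP He).
have p_odd : odd p.
  by case: (even_prime p_pr) => // p_eq2; rewrite p_eq2 in p_ndvd.
apply/negP => /even_prime[/eqP|]; last by rewrite /= oddM p_odd d_odd.
by rewrite eqSS muln_eq1 => /andP[/eqP p_eq1 _]; rewrite p_eq1 in p_pr.
Qed.

Section MembersOfMp.

Variables p n : nat.
Hypothesis p_pr : prime p.
Hypothesis p_ndvd1806 : ~~ (p %| 1806).
Hypothesis no_prime_succ : forall d, d %| 1806 -> ~~ prime (p * d).+1.
Hypothesis n_inM : inM p n.

Let n_gt0 : 0 < n. Proof. by case: n_inM. Qed.

Lemma inM_mod M : M %| n -> S n n %% M = p %% M.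
Proof.
by case: n_inM => _ HS M_dvd; rewrite -(modn_dvdm _ M_dvd) HS modn_dvdm.
Qed.

Lemma inM_prime_mod0 q : prime q -> q %| n -> S n n %% q = 0 -> q = p.
Proof.
move=> q_pr q_dvd; rewrite inM_mod // => /eqP q_dvd_p.
by apply/eqP; rewrite -dvdn_prime2.
Qed.

Lemma inM_pred_dvd q : prime q -> q %| n -> q != p -> q.-1 %| n.
Proof.
move=> q_pr q_dvd; apply: contraR => q1_ndvd.
apply/eqP/(inM_prime_mod0 q_pr q_dvd).
by rewrite -[q in _ %% q]expn1 S_mod_prime_pow ?expn1.
Qed.

Lemma inM_sq_ndvd q : prime q -> q != p -> ~~ (q ^ 2 %| n).
Proof.
move=> q_pr; apply: contraNN => q2_dvd; apply/eqP.
have q_dvd : q %| n by rewrite (dvdn_trans _ q2_dvd) // dvdn_exp.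
exact: inM_prime_mod0 q_pr q_dvd (S_mod_prime_sq n_gt0 q_pr q2_dvd).
Qed.

Lemma inM_pred_dvd_of_sq : p ^ 2 %| n -> p.-1 %| n.
Proof.
move=> p2_dvd; apply/contraT => p1_ndvd.
have := S_mod_prime_pow n_gt0 p_pr p2_dvd p1_ndvd.
rewrite inM_mod // modn_small => [p_eq0|]; first by move: p_pr; rewrite p_eq0.
by rewrite -[X in X < _]expn1 ltn_exp2l ?prime_gt1.
Qed.

Lemma inM_squarefree_dvd1806 x : 0 < x -> x %| n -> ~~ (p %| x) ->
  (forall s, prime s -> s %| x -> s %| 1806) -> x %| 1806.
Proof.
move=> x_gt0 x_dvd p_ndvd Hx; apply: dvdn_squarefree => // s s_pr s_dvd.
split; first exact: Hx.
have s_neq_p : s != p by apply: contraNneq p_ndvd => <-.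
by apply: contra (inM_sq_ndvd s_pr s_neq_p); move/dvdn_trans; apply.
Qed.

Lemma inM_pred_p_ndvd : (forall s, prime s -> s < p -> s %| n -> s %| 1806) ->
  ~~ (p.-1 %| n).
Proof.
move=> Hsmall; apply: contra p_ndvd1806 => p1_dvd.
have p1_gt0 : 0 < p.-1 by rewrite -ltnS prednK ?prime_gt1 ?prime_gt0.
have p1_lt_p : p.-1 < p by rewrite prednK ?prime_gt0.
rewrite -(prednK (prime_gt0 p_pr)) prime_succ_dvd1806 ?prednK ?prime_gt0 //.
apply: inM_squarefree_dvd1806 => //; first by rewrite gtnNdvd.
move=> s s_pr s_dvd; apply: Hsmall => //; last exact: dvdn_trans p1_dvd.
by rewrite (leq_ltn_trans (dvdn_leq p1_gt0 s_dvd)).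
Qed.

Lemma inM_prime_dvd1806 r : prime r -> r %| n -> r != p -> r %| 1806.
Proof.
elim/ltn_ind: r => r IH r_pr r_dvd r_neq_p.
have r1_dvd := inM_pred_dvd r_pr r_dvd r_neq_p.
have r1_gt0 : 0 < r.-1 by rewrite -ltnS prednK ?prime_gt1 ?prime_gt0.
have r1_lt_r : r.-1 < r by rewrite prednK ?prime_gt0.
have small_dvd1806 s : prime s -> s %| r.-1 -> s != p -> s %| 1806.
  move=> s_pr s_dvd; apply: IH => //; last exact: dvdn_trans r1_dvd.
  by rewrite (leq_ltn_trans (dvdn_leq r1_gt0 s_dvd)).
set d := r.-1`_p^'.
have d_dvd1806 : d %| 1806.
  have p_ndvd_d : ~~ (p %| d).
    by apply/negP => /pnat_dvd/(_ (part_pnat _ _)); rewrite pnatE // !inE eqxx.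
  apply: (inM_squarefree_dvd1806 (part_gt0 _ _) _ p_ndvd_d).
    exact: dvdn_trans (dvdn_part _ _) r1_dvd.
  move=> s s_pr s_dvd; apply: small_dvd1806 => //.
    exact: dvdn_trans s_dvd (dvdn_part _ _).
  by apply: contraNneq p_ndvd_d => <-.
have r_eq : r = (p ^ logn p r.-1 * d).+1.
  by rewrite -p_part partnC // prednK ?prime_gt0.
case: (ltngtP (logn p r.-1) 1) => [|a_gt1|a_eq1].
- rewrite ltnS leqn0 => /eqP a_eq0.
  by rewrite r_eq a_eq0 mul1n in r_pr *; apply: prime_succ_dvd1806.
- have p2_dvd : p ^ 2 %| r.-1 by rewrite pfactor_dvdn.
  have p_lt_r : p < r.
    apply: leq_ltn_trans r1_lt_r; apply: leq_trans (dvdn_leq r1_gt0 p2_dvd).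
    by rewrite -[X in X <= _]expn1 leq_exp2l ?prime_gt1.
  have below_p_dvd1806 s : prime s -> s < p -> s %| n -> s %| 1806.
    by move=> s_pr s_lt s_dvd; rewrite IH ?(ltn_trans s_lt) ?ltn_eqF.
  have := inM_pred_p_ndvd below_p_dvd1806.
  by rewrite inM_pred_dvd_of_sq // (dvdn_trans p2_dvd).
- by move: r_pr; rewrite r_eq a_eq1 expn1 (negbTE (no_prime_succ d_dvd1806)).
Qed.

Lemma inM_logn_le1 : logn p n <= 1.
Proof.
rewrite leqNgt; apply/negP => a_gt1.
have below_p_dvd1806 s : prime s -> s < p -> s %| n -> s %| 1806.
  by move=> s_pr s_lt s_dvd; rewrite inM_prime_dvd1806 ?ltn_eqF.
have := inM_pred_p_ndvd below_p_dvd1806.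
by rewrite inM_pred_dvd_of_sq // pfactor_dvdn.
Qed.

Lemma inM_ppart_baseSet : n`_p^' \in baseSet.
Proof.
have m_dvd : n`_p^' %| n := dvdn_part _ _.
have s_neq_p s : prime s -> s %| n`_p^' -> s != p.
  by move=> s_pr /pnat_dvd/(_ (part_pnat _ _)); rewrite pnatE // inE.
have q_dvd1806 q : prime q -> q %| n`_p^' -> q %| 1806.
  by move=> q_pr q_dvd; rewrite inM_prime_dvd1806 ?s_neq_p ?(dvdn_trans q_dvd).
apply: dvd1806_baseSet => [|q q_pr q_dvd].
  apply: (inM_squarefree_dvd1806 (part_gt0 _ _) m_dvd) q_dvd1806.
  by apply/negP => /(s_neq_p _ p_pr); rewrite eqxx.
have q1_dvd1806 := pred_prime_dvd1806 q_pr (q_dvd1806 q q_pr q_dvd).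
have co_q1_pp : coprime q.-1 n`_p.
  rewrite p_part coprimeXr // coprime_sym prime_coprime //.
  by apply: contra p_ndvd1806 => /dvdn_trans; apply.
rewrite -(Gauss_dvdr _ co_q1_pp) partnC //.
by rewrite inM_pred_dvd ?s_neq_p ?(dvdn_trans q_dvd).
Qed.

End MembersOfMp.

Theorem mainTheorem12 (p : nat) :
  prime p -> p \notin [:: 2; 3; 7; 43] ->
  ~~ prime (1 + 2 * p) -> ~~ prime (1 + 6 * p) -> ~~ prime (1 + 14 * p) ->
  ~~ prime (1 + 42 * p) -> ~~ prime (1 + 86 * p) -> ~~ prime (1 + 258 * p) ->
  ~~ prime (1 + 602 * p) -> ~~ prime (1 + 1806 * p) ->
  forall n : nat, inM p n ->
    (n \in baseSet) || (n \in [seq p * c | c <- baseSet]).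
Proof.
move=> p_pr p_notin h2 h6 h14 h42 h86 h258 h602 h1806 n n_inM.
have p_ndvd := prime_notin_ndvd1806 p_pr p_notin.
have no_prime_succ d : d %| 1806 -> ~~ prime (p * d).+1.
  apply: not_prime_succ_mul => //=.
  by rewrite h2 h6 h14 h42 h86 h258 h602 h1806.
have n_eq : n = p ^ logn p n * n`_p^' by rewrite -p_part partnC //; case: n_inM.
have m_base := inM_ppart_baseSet p_pr p_ndvd no_prime_succ n_inM.
move: (inM_logn_le1 p_pr p_ndvd no_prime_succ n_inM).
rewrite leq_eqVlt ltnS leqn0 => /orP[|] /eqP a_eq; rewrite n_eq a_eq.
  by rewrite expn1 (map_f _ m_base) orbT.
by rewrite expn0 mul1n m_base.
Qed.
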